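(* Let $\alpha\in\mathbb{R}$ be transcendental over $\mathbb{Q}$ and let $K=\mathbb{Q}(\alpha)$. Identify each element of $K$ with the unique rational function $r\in\mathbb{Q}(x)$ such that the element equals $r(\alpha)$, and let $K^+$ be the set of those $r$ with $r(\alpha)>0$. Define $H_+=\{r\in K^+ : r'(\alpha)>0\}$, $H_0=\{r\in K^+ : r'(\alpha)=0\}$, $H_-=\{r\in K^+ : r'(\alpha)<0\}$, where $r'$ is the (formal) derivative of $r$. Then $H_+$, $H_0$, $H_-$ are pairwise disjoint, nonempty, each closed under addition and multiplication, and $K^+=H_+\sqcup H_0\sqcup H_-$. *)

From HB Require Import structures.
From mathcomp Require Import all_boot all_order all_algebra.
From mathcomp Require Import all_reals.
Set Implicit Arguments. Unset Strict Implicit. Unset Printing Implicit Defensive.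
Import Order.TTheory GRing.Theory Num.Theory.
Local Open Scope ring_scope.

Notation Qx := {fraction {poly rat}}.

Definition transcendental (R : realType) (a : R) : Prop :=
  forall p : {poly rat}, p != 0 -> (map_poly (ratr : rat -> R) p).[a] != 0.

Definition fnum (r : Qx) : {poly rat} := \n_(repr r).
Definition fden (r : Qx) : {poly rat} := \d_(repr r).

Definition feval (R : realType) (a : R) (r : Qx) : R :=
  (map_poly (ratr : rat -> R) (fnum r)).[a] /
  (map_poly (ratr : rat -> R) (fden r)).[a].

Definition fderiv (r : Qx) : Qx :=
  FracField.tofrac ((fnum r)^`() * fden r - fnum r * (fden r)^`()) / FracField.tofrac ((fden r) ^+ 2).

Definition Kpos (R : realType) (a : R) (r : Qx) : Prop := 0 < feval a r.
Definition Hplus (R : realType) (a : R) (r : Qx) : Prop :=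
  Kpos a r /\ 0 < feval a (fderiv r).
Definition Hzero (R : realType) (a : R) (r : Qx) : Prop :=
  Kpos a r /\ feval a (fderiv r) = 0.
Definition Hminus (R : realType) (a : R) (r : Qx) : Prop :=
  Kpos a r /\ feval a (fderiv r) < 0.

Definition closed_add_mul (P : Qx -> Prop) : Prop :=
  (forall r s, P r -> P s -> P (r + s)) /\ (forall r s, P r -> P s -> P (r * s)).

From mathcomp Require Import all_boot all_order all_algebra.
From mathcomp Require Import all_reals.
From mathcomp Require Import ring lra.
Set Implicit Arguments. Unset Strict Implicit. Unset Printing Implicit Defensive.
Import Order.TTheory GRing.Theory Num.Theory.
Local Open Scope ring_scope.

(* Since alpha is transcendental, no nonzero polynomial vanishes at alpha, so
   r |-> r(alpha) is a well-defined ring morphism on Q(x) and r |-> r'(alpha) is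
   a derivation along it: (r + s)'(alpha) = r'(alpha) + s'(alpha) and
   (r s)'(alpha) = r'(alpha) s(alpha) + r(alpha) s'(alpha).  On K^+, where
   r(alpha) and s(alpha) are positive, both right-hand sides therefore have the
   common sign of r'(alpha) and s'(alpha).  The polynomials x + k, 1 and k - x,
   with k an integer above |alpha|, witness nonemptiness. *)

Local Notation "x %:F" := (@FracField.tofrac _ x) (format "x %:F").

Section FractionRepresentation.
Variable R : idomainType.

Lemma frac_numden (x : {fraction R}) : x = (\n_(repr x))%:F / (\d_(repr x))%:F.
Proof.
have d_neq0 : (\d_(repr x))%:F != 0 by rewrite tofrac_eq0 denom_ratioP.
apply: (canRL (mulfK d_neq0)); rewrite -{1}[x]reprK.
unlock FracField.tofrac; rewrite /GRing.mul /=.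
apply: etrans (esym (FracField.pi_mul _ _)) _; apply/eqmodP => /=.
rewrite FracField.equivfE /FracField.mulf.
by rewrite !numden_Ratio ?mulf_neq0 ?oner_neq0 ?denom_ratioP // !mulr1 mulrC.
Qed.

Lemma tofrac_div_eq (n d m e : R) : d != 0 -> e != 0 ->
  n%:F / d%:F = m%:F / e%:F -> n * e = m * d.
Proof.
move=> d_neq0 e_neq0 nd_me; apply/eqP; rewrite -tofrac_eq !tofracM.
by rewrite -eqr_div ?tofrac_eq0 // nd_me.
Qed.

End FractionRepresentation.

Lemma fden_neq0 (r : Qx) : fden r != 0.
Proof. exact: denom_ratioP. Qed.

Lemma fracE (r : Qx) : r = (fnum r)%:F / (fden r)%:F.
Proof. exact: frac_numden. Qed.

Lemma fracD (r s : Qx) :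
  r + s = (fnum r * fden s + fnum s * fden r)%:F / (fden r * fden s)%:F.
Proof.
rewrite {1}[r]fracE {1}[s]fracE addf_div ?tofrac_eq0 ?fden_neq0 //.
by rewrite tofracD !tofracM.
Qed.

Lemma fracM (r s : Qx) : r * s = (fnum r * fnum s)%:F / (fden r * fden s)%:F.
Proof. by rewrite {1}[r]fracE {1}[s]fracE mulf_div !tofracM. Qed.

Section EvaluationAtTranscendental.
Variables (R : realType) (a : R).
Hypothesis a_transcendental : transcendental a.

Lemma ratr_comm_a : commr_rmorph (ratr : rat -> R) a.
Proof. by move=> c; apply: mulrC. Qed.

Local Notation ev := (horner_morph ratr_comm_a).

Lemma ev_neq0 p : p != 0 -> ev p != 0.
Proof. exact: a_transcendental. Qed.

Definition quotient_rule (n d : {poly rat}) : R :=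
  (ev n^`() * ev d - ev n * ev d^`()) / ev d ^+ 2.

Lemma feval_frac (n d : {poly rat}) : d != 0 -> feval a (n%:F / d%:F) = ev n / ev d.
Proof.
move=> d_neq0; set r := _ / _.
have := tofrac_div_eq d_neq0 (fden_neq0 r) (fracE r).
move=> /(congr1 ev); rewrite !rmorphM => cross.
by apply/eqP; rewrite /feval -/(ev _) -/(ev _) eqr_div ?ev_neq0 ?fden_neq0 // cross.
Qed.

Lemma quotient_rule_cross (F : fieldType) (n d m e n' d' m' e' : F) :
  d != 0 -> e != 0 -> n * e = m * d -> n' * e + n * e' = m' * d + m * d' ->
  (n' * d - n * d') / d ^+ 2 = (m' * e - m * e') / e ^+ 2.
Proof.
move=> d_neq0 e_neq0 cross cross'.
have -> : m' = (n' * e + n * e' - m * d') / d by rewrite cross'; field.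
have -> : m = n * e / d by rewrite cross; field.
by field; rewrite e_neq0 d_neq0.
Qed.

(* Differentiating n e = m d shows that the quotient rule does not depend on
   the chosen representative of the fraction. *)
Lemma quotient_rule_eq (n d m e : {poly rat}) : d != 0 -> e != 0 ->
  n * e = m * d -> quotient_rule n d = quotient_rule m e.
Proof.
move=> d_neq0 e_neq0 cross.
have := congr1 ev (congr1 (@deriv _) cross); rewrite !derivM !rmorphD !rmorphM.
have := congr1 ev cross; rewrite !rmorphM.
exact: quotient_rule_cross (ev_neq0 d_neq0) (ev_neq0 e_neq0).
Qed.

Lemma feval_fderiv_frac (n d : {poly rat}) : d != 0 ->
  feval a (fderiv (n%:F / d%:F)) = quotient_rule n d.
Proof.
move=> d_neq0; set r := _ / _.
rewrite /fderiv feval_frac ?expf_neq0 ?fden_neq0 //.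
rewrite rmorphB rmorphXn !rmorphM.
have cross := tofrac_div_eq d_neq0 (fden_neq0 r) (fracE r).
exact: esym (quotient_rule_eq d_neq0 (fden_neq0 r) cross).
Qed.

Lemma fevalE (r : Qx) : feval a r = ev (fnum r) / ev (fden r).
Proof. by []. Qed.

Lemma feval_fderivE (r : Qx) :
  feval a (fderiv r) = quotient_rule (fnum r) (fden r).
Proof. by rewrite {1}[r]fracE feval_fderiv_frac ?fden_neq0. Qed.

Lemma feval_tofrac (p : {poly rat}) : feval a p%:F = ev p.
Proof. by rewrite -[p%:F]divr1 -tofrac1 feval_frac ?oner_neq0 // rmorph1 divr1. Qed.

Lemma feval_fderiv_tofrac (p : {poly rat}) : feval a (fderiv p%:F) = ev p^`().
Proof.
rewrite -[p%:F]divr1 -tofrac1 feval_fderiv_frac ?oner_neq0 // /quotient_rule.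
by rewrite derivC rmorph0 rmorph1 expr1n mulr0 subr0 mulr1 divr1.
Qed.

Lemma fevalD (r s : Qx) : feval a (r + s) = feval a r + feval a s.
Proof.
have := ev_neq0 (fden_neq0 r); have := ev_neq0 (fden_neq0 s).
rewrite [in LHS]fracD feval_frac ?mulf_neq0 ?fden_neq0 // !fevalE.
by rewrite rmorphD !rmorphM => s_neq0 r_neq0; field; rewrite r_neq0 s_neq0.
Qed.

Lemma fevalM (r s : Qx) : feval a (r * s) = feval a r * feval a s.
Proof.
have := ev_neq0 (fden_neq0 r); have := ev_neq0 (fden_neq0 s).
rewrite [in LHS]fracM feval_frac ?mulf_neq0 ?fden_neq0 // !fevalE.
by rewrite !rmorphM => s_neq0 r_neq0; field; rewrite r_neq0 s_neq0.
Qed.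

Lemma feval_fderivD (r s : Qx) :
  feval a (fderiv (r + s)) = feval a (fderiv r) + feval a (fderiv s).
Proof.
have := ev_neq0 (fden_neq0 r); have := ev_neq0 (fden_neq0 s).
rewrite [in LHS]fracD feval_fderiv_frac ?mulf_neq0 ?fden_neq0 // !feval_fderivE.
rewrite /quotient_rule !derivD !derivM !rmorphD !rmorphM => s_neq0 r_neq0.
by field; rewrite r_neq0 s_neq0.
Qed.

Lemma feval_fderivM (r s : Qx) : feval a (fderiv (r * s)) =
  feval a (fderiv r) * feval a s + feval a r * feval a (fderiv s).
Proof.
have := ev_neq0 (fden_neq0 r); have := ev_neq0 (fden_neq0 s).
rewrite [in LHS]fracM feval_fderiv_frac ?mulf_neq0 ?fden_neq0 //.
rewrite !feval_fderivE !fevalE /quotient_rule !derivM !rmorphD !rmorphM.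
by move=> s_neq0 r_neq0; field; rewrite r_neq0 s_neq0.
Qed.

Lemma Kpos_deriv_sign_closed (sgn : R -> Prop) :
  (forall x y, sgn x -> sgn y -> sgn (x + y)) ->
  (forall x y u v, 0 < u -> 0 < v -> sgn x -> sgn y -> sgn (x * v + u * y)) ->
  closed_add_mul (fun r => Kpos a r /\ sgn (feval a (fderiv r))).
Proof.
move=> sgnD sgnM; split=> r s [Fr Gr] [Fs Gs]; split.
- by rewrite /Kpos fevalD addr_gt0.
- by rewrite feval_fderivD; apply: sgnD.
- by rewrite /Kpos fevalM mulr_gt0.
- by rewrite feval_fderivM; apply: sgnM.
Qed.

Lemma Hplus_closed : closed_add_mul (Hplus a).
Proof. by apply: (@Kpos_deriv_sign_closed (fun x => 0 < x)) => *; nra. Qed.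

Lemma Hzero_closed : closed_add_mul (Hzero a).
Proof.
apply: (@Kpos_deriv_sign_closed (fun x => x = 0)) => [x y -> -> | x y u v _ _ -> ->].
  by rewrite addr0.
by rewrite mul0r mulr0 addr0.
Qed.

Lemma Hminus_closed : closed_add_mul (Hminus a).
Proof. by apply: (@Kpos_deriv_sign_closed (fun x => x < 0)) => *; nra. Qed.

Lemma Hzero_witness : Hzero a 1.
Proof.
rewrite /Hzero /Kpos -tofrac1 feval_tofrac feval_fderiv_tofrac.
by rewrite derivC !rmorph1 rmorph0.
Qed.

Lemma exists_nat_gt_norm : exists k : nat, `|a| < k%:R.
Proof. by exists (Num.Def.archi_bound `|a|); apply: archi_boundP. Qed.

Lemma Hplus_witness : exists r, Hplus a r.
Proof.
have [k a_lt_k] := exists_nat_gt_norm.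
exists ('X + k%:R%:P)%:F; rewrite /Hplus /Kpos feval_tofrac feval_fderiv_tofrac.
rewrite derivD derivX derivC addr0 rmorph1 rmorphD /=.
rewrite horner_morphX horner_morphC rmorph_nat.
by have := ler_norm (- a); rewrite normrN; split; lra.
Qed.

Lemma Hminus_witness : exists r, Hminus a r.
Proof.
have [k a_lt_k] := exists_nat_gt_norm.
exists (k%:R%:P - 'X)%:F; rewrite /Hminus /Kpos feval_tofrac feval_fderiv_tofrac.
rewrite derivB derivX derivC sub0r rmorphN rmorph1 rmorphB /=.
rewrite horner_morphX horner_morphC rmorph_nat.
by have := ler_norm a; split; lra.
Qed.

End EvaluationAtTranscendental.

Theorem proposition2p1 (R : realType) (a : R) (ha : transcendental a) :
  (* pairwise disjoint *)
  (forall r, ~ (Hplus a r /\ Hzero a r)) /\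
  (forall r, ~ (Hplus a r /\ Hminus a r)) /\
  (forall r, ~ (Hzero a r /\ Hminus a r)) /\
  (* nonempty *)
  (exists r, Hplus a r) /\ (exists r, Hzero a r) /\ (exists r, Hminus a r) /\
  (* closed under addition and multiplication *)
  closed_add_mul (Hplus a) /\ closed_add_mul (Hzero a) /\ closed_add_mul (Hminus a) /\
  (* K^+ is the union *)
  (forall r, Kpos a r <-> (Hplus a r \/ Hzero a r \/ Hminus a r)).
Proof.
do 3 (split; first by move=> r [[_ ?] [_ ?]]; lra).
split; first exact: Hplus_witness.
split; first by exists 1; apply: Hzero_witness.
split; first exact: Hminus_witness.
split; first exact: Hplus_closed.
split; first exact: Hzero_closed.
split; first exact: Hminus_closed.
move=> r; split; last by case=> [[]|[[]|[]]].
by case: (ltrgtP (feval a (fderiv r)) 0) => ?; [right; right|left|right; left].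
Qed.
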